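(* Assume the standing hypotheses (H). Let $A$ be a part of $G$ with $|A|=3$, and let $L_A$ be the set of colors $c$ such that $c\in L(u)\cap L(v)$ for some good pair $\{u,v\}$ for $A$. Then $|L_A|\ge k_3+\frac{k_1+k_4}{3}$.
   Context: A list assignment $L$ assigns to each vertex $v$ a set $L(v)$ of colors; an $L$-coloring is a proper coloring $f$ with $f(v)\in L(v)$ for all $v$; $\mathrm{ch}$ denotes choice number and $\chi$ chromatic number. A part of a complete multipartite graph is one of its maximal stable sets. Standing hypotheses (H): $k\ge1$ and $n\ge 2k+2$ are integers; $G$ is a complete $k$-partite graph (exactly $k$ nonempty parts) on $n$ vertices; $L$ is a list assignment for $G$ with $|L(v)|\ge\lceil (n+k-1)/3\rceil$ for every vertex $v$; $G$ has no $L$-coloring; $\left|\bigcup_{v\in V(G)}L(v)\right|\le n-1$; and every graph $H$ with fewer than $n$ vertices satisfies $\mathrm{ch}(H)\le\max\{\chi(H),\lceil(|V(H)|+\chi(H)-1)/3\rceil\}$. For $i\in\{1,2,3,4\}$, $k_i$ denotes the number of parts of $G$ of size $i$. For a part $A$ with $|A|\ge3$, a pair $\{u,v\}\subseteq A$ of distinct vertices is a good pair for $A$ if either $|A|=3$ and $|L(u)\cap L(v)|\ge\frac{k_1+k_4+1}{3}$, or $|A|=4$ and $|L(u)\cap L(v)|\ge|L(w)\cap L(z)|$ where $\{w,z\}=A\setminus\{u,v\}$. *)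

From mathcomp Require Import all_boot.
Set Implicit Arguments. Unset Strict Implicit. Unset Printing Implicit Defensive.

Definition sadj (V : finType) (e : rel V) : rel V :=
  fun x y => (x != y) && (e x y || e y x).

Definition kcolb (V : finType) (e : rel V) (k : nat) : bool :=
  [exists f : {ffun V -> 'I_k},
     [forall x, [forall y, sadj e x y ==> (f x != f y)]]].

Lemma kcol_ex (V : finType) (e : rel V) : exists k, kcolb e k.
Proof.
exists #|V|; apply/existsP; exists [ffun x => enum_rank x].
apply/forallP => x; apply/forallP => y; apply/implyP => /andP [hxy _].
by rewrite !ffunE; apply: contra hxy => /eqP /enum_rank_inj ->.
Qed.

Definition chi (V : finType) (e : rel V) : nat := ex_minn (kcol_ex e).

Definition Lcoloring (V : finType) (e : rel V) (C : finType)
  (L : V -> {set C}) (f : V -> C) : Prop :=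
  (forall v, f v \in L v) /\ (forall x y, sadj e x y -> f x != f y).

Definition choosable (V : finType) (e : rel V) (m : nat) : Prop :=
  forall (C : finType) (L : V -> {set C}),
    (forall v, m <= #|L v|) -> exists f : V -> C, Lcoloring e L f.

Definition ceil3 (a : nat) : nat := (a + 2) %/ 3.

Definition kpart_adj (V : finType) (k : nat) (p : V -> 'I_k) : rel V :=
  fun x y => p x != p y.

Definition partset (V : finType) (k : nat) (p : V -> 'I_k) (i : 'I_k) : {set V} :=
  [set v | p v == i].

Definition kcount (V : finType) (k : nat) (p : V -> 'I_k) (s : nat) : nat :=
  #|[set j : 'I_k | #|partset p j| == s]|.

Definition good_pair (V : finType) (k : nat) (p : V -> 'I_k) (C : finType)
  (L : V -> {set C}) (u v : V) : bool :=
  let A := partset p (p u) in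
  [&& u != v, p u == p v &
   ((#|A| == 3) && (kcount p 1 + kcount p 4 + 1 <= 3 * #|L u :&: L v|))
   || ((#|A| == 4) &&
       [forall w, [forall z,
          [&& w != z, w \in A :\: [set u; v] & z \in A :\: [set u; v]]
          ==> (#|L w :&: L z| <= #|L u :&: L v|)]])].

Definition LA (V : finType) (k : nat) (p : V -> 'I_k) (C : finType)
  (L : V -> {set C}) (a : 'I_k) : {set C} :=
  [set c | [exists u, [exists v,
      [&& u \in partset p a, v \in partset p a, good_pair p L u v
        & c \in L u :&: L v]]]].

From mathcomp Require Import all_boot.
From mathcomp Require Import zify.

Set Implicit Arguments.
Unset Strict Implicit.
Unset Printing Implicit Defensive.

(* Let A = {x, y, z} be a part of size 3 and write I_uv = L(u) :&: L(v).
   1. No color lies in all three lists of A: otherwise delete A, color the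
      remaining complete multipartite graph (it has fewer than n vertices
      and chromatic number at most k) from the lists minus that color by
      minimality, and give every vertex of the stable set A that color.
   2. Hence the three sets I_xy, I_xz, I_yz are pairwise disjoint, and
      inclusion-exclusion together with |L(x) :|: L(y) :|: L(z)| <= n - 1
      and |L(v)| >= (n + k - 1) / 3 gives |I_xy| + |I_xz| + |I_yz| >= k,
      while k >= k_1 + k_3 + k_4.
   3. The good meets I_uv (those with 3 |I_uv| >= k_1 + k_4 + 1) are
      disjoint subsets of L_A, so |L_A| is at least the sum of their sizes;
      a short arithmetic estimate on the three sizes finishes the proof. *)

Lemma cards3P (T : finType) (A : {set T}) : #|A| = 3 ->
  exists x y z, [/\ x != y, x != z, y != z & A = [set x; y; z]].
Proof.
move=> hA; have [x hx] : exists x, x \in A by apply/card_gt0P; rewrite hA.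
have [y [z [hyz hAx]]] : exists y z, y != z /\ A :\ x = [set y; z].
  by apply/cards2P/eqP; move: hA; rewrite (cardsD1 x) hx; lia.
have hxA : x \notin [set y; z] by rewrite -hAx setD11.
exists x, y, z; split=> //.
- by apply: contraNneq hxA => ->; rewrite !inE eqxx.
- by apply: contraNneq hxA => ->; rewrite !inE eqxx orbT.
- by rewrite -(setD1K hx) hAx setUA.
Qed.

Lemma cardsU3_disjoint (T : finType) (A B D : {set T}) :
  A :&: B = set0 -> A :&: D = set0 -> B :&: D = set0 ->
  #|A :|: B :|: D| = #|A| + #|B| + #|D|.
Proof.
move=> hAB hAD hBD; have := cardsUI (A :|: B) D; have := cardsUI A B.
by rewrite setIUl hAD hBD hAB setU0 !cards0; lia.
Qed.

Lemma meets_disjoint (T : finType) (A B D P Q : {set T}) :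
  A :&: B :&: D = set0 -> P \subset A :&: B -> Q \subset D ->
  P :&: Q = set0.
Proof. by move=> h0 hP hQ; apply/eqP; rewrite -subset0 -h0 setISS. Qed.

Lemma cardsU3_meets (T : finType) (A B D : {set T}) : A :&: B :&: D = set0 ->
  #|A :|: B :|: D| + (#|A :&: B| + #|A :&: D| + #|B :&: D|) =
  #|A| + #|B| + #|D|.
Proof.
move=> h0; have := cardsUI (A :|: B) D; have := cardsUI A B.
have hABD : (A :&: D) :&: (B :&: D) = set0 by rewrite setIACA setIid.
have := cardsUI (A :&: D) (B :&: D); rewrite hABD setIUl cards0; lia.
Qed.

Lemma chi_le (W : finType) (e : rel W) (m : nat) : kcolb e m -> chi e <= m.
Proof. by rewrite /chi; case: ex_minnP => m' _; apply. Qed.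

Lemma sadj_kpart (W : finType) (k : nat) (q : W -> 'I_k) (x y : W) :
  sadj (kpart_adj q) x y = (q x != q y).
Proof.
rewrite /sadj /kpart_adj [q y == q x]eq_sym orbb.
by apply/andb_idl; apply: contraNneq => ->.
Qed.

Lemma chi_kpart_le (W : finType) (k : nat) (q : W -> 'I_k) :
  chi (kpart_adj q) <= k.
Proof.
apply: chi_le; apply/existsP; exists [ffun w => q w].
apply/forallP => u; apply/forallP => w.
by apply/implyP; rewrite sadj_kpart !ffunE.
Qed.

Section DeletePart.

Variables (V : finType) (k : nat) (p : V -> 'I_k).
Variables (C : finType) (L : V -> {set C}).
Variable a : 'I_k.

Definition outside : finType := {v : V | p v != a}.
Definition outside_part (w : outside) : 'I_k := p (val w).

Lemma card_outside : #|outside| = #|V| - #|partset p a|.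
Proof.
rewrite card_sig -(cardsC (partset p a)) addKn.
by apply: eq_card => v; rewrite !inE.
Qed.

Lemma extend_by_common_color (c : C) (hc : forall v, p v = a -> c \in L v)
    (f : outside -> C) :
  Lcoloring (kpart_adj outside_part) (fun w => L (val w) :\ c) f ->
  exists g : V -> C, Lcoloring (kpart_adj p) L g.
Proof.
move=> [hf_list hf_proper].
have hf_c w : f w != c by have := hf_list w; rewrite in_setD1 => /andP [].
exists (fun v => if insub v is Some w then f w else c); split.
  move=> v; case: insubP => [w _ <- | /negPn/eqP /hc //].
  by have := hf_list w; rewrite in_setD1 => /andP [].
move=> x y; rewrite sadj_kpart => pxy.
case: insubP => [u _ hu | /negPn/eqP hx];
  case: insubP => [w _ hw | /negPn/eqP hy].
- by apply: hf_proper; rewrite sadj_kpart /outside_part hu hw.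
- exact: hf_c.
- by rewrite eq_sym.
- by move: pxy; rewrite hx hy eqxx.
Qed.

End DeletePart.

Arguments outside_part {V k} p a w.

Lemma no_common_color (k n : nat) (V : finType) (p : V -> 'I_k)
    (C : finType) (L : V -> {set C})
    (hn : 2 * k + 2 <= n) (hV : #|V| = n)
    (hL : forall v, ceil3 (n + k - 1) <= #|L v|)
    (hnocol : ~ exists f : V -> C, Lcoloring (kpart_adj p) L f)
    (hmin : forall (W : finType) (e : rel W), #|W| < n ->
       choosable e (maxn (chi e) (ceil3 (#|W| + chi e - 1))))
    (a : 'I_k) (hA : 3 <= #|partset p a|) (c : C) :
  ~ (forall v, p v = a -> c \in L v).
Proof.
move=> hc; apply: hnocol.
have hW := card_outside p a; have hchi := chi_kpart_le (outside_part p a).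
have hAn : #|partset p a| <= n by rewrite -hV max_card.
have [f hf] : exists f : outside p a -> C,
    Lcoloring (kpart_adj (outside_part p a)) (fun w => L (val w) :\ c) f.
  apply: hmin => [|w]; first by rewrite hW hV; lia.
  have := hL (val w); rewrite (cardsD1 c) hW hV /ceil3.
  by case: (c \in L (val w)) => /=; lia.
exact: extend_by_common_color hc f hf.
Qed.

(* Step 3 in arithmetic form: a meet of size i contributes to L_A when it is
   good, i.e. when 3 i > s with s = k_1 + k_4. *)
Definition good_weight (s i : nat) : nat := if s < 3 * i then i else 0.

Lemma good_weight_sum (t s i1 i2 i3 : nat) : 0 < t -> t + s <= i1 + i2 + i3 ->
  3 * t + s <= 3 * (good_weight s i1 + good_weight s i2 + good_weight s i3).
Proof. by rewrite /good_weight; do 3 case: ifP; lia. Qed.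

Lemma kcount_sum3_le (V : finType) (k : nat) (p : V -> 'I_k) (i j l : nat) :
  i != j -> i != l -> j != l -> kcount p i + kcount p j + kcount p l <= k.
Proof.
pose S m := [set t : 'I_k | #|partset p t| == m].
have hS m m' : m != m' -> S m :&: S m' = set0.
  move=> hm; apply/setP => t; rewrite !inE.
  by apply: contraNF hm => /andP [/eqP <- /eqP <-].
move=> hij hil hjl; rewrite /kcount -/(S i) -/(S j) -/(S l).
by rewrite -cardsU3_disjoint ?hS // -[k in _ <= k]card_ord max_card.
Qed.

Lemma kcount_pos (V : finType) (k : nat) (p : V -> 'I_k) (a : 'I_k) :
  0 < kcount p #|partset p a|.
Proof. by apply/card_gt0P; exists a; rewrite inE. Qed.

Section PartOfSizeThree.

Variables (V : finType) (k : nat) (p : V -> 'I_k).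
Variables (C : finType) (L : V -> {set C}).

Lemma meets_sum_lower (n : nat) (x y z : V) (hn : 0 < n)
    (hL : forall v, ceil3 (n + k - 1) <= #|L v|)
    (hunion : #|\bigcup_(v in V) L v| <= n - 1)
    (h0 : L x :&: L y :&: L z = set0) :
  k <= #|L x :&: L y| + #|L x :&: L z| + #|L y :&: L z|.
Proof.
have hU : #|L x :|: L y :|: L z| <= n - 1.
  apply: leq_trans hunion; apply: subset_leq_card.
  by rewrite !subUset !(bigcup_sup _ (isT : true)).
have := cardsU3_meets h0; have := hL x; have := hL y; have := hL z.
rewrite /ceil3; lia.
Qed.

Variable a : 'I_k.
Hypothesis hA : #|partset p a| = 3.

Definition good_meet (u v : V) : {set C} :=
  if good_pair p L u v then L u :&: L v else set0.

Lemma good_meet_sub (u v : V) : good_meet u v \subset L u :&: L v.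
Proof. by rewrite /good_meet; case: ifP; rewrite ?sub0set. Qed.

Lemma good_meet_sub_LA (u v : V) :
  p u = a -> p v = a -> good_meet u v \subset LA p L a.
Proof.
move=> hu hv; rewrite /good_meet; case: ifP => hg; last exact: sub0set.
apply/subsetP => c hc; rewrite inE; apply/existsP; exists u; apply/existsP.
by exists v; rewrite hc hg !inE hu hv eqxx.
Qed.

Lemma card_good_meet (u v : V) : p u = a -> p v = a -> u != v ->
  #|good_meet u v| = good_weight (kcount p 1 + kcount p 4) #|L u :&: L v|.
Proof.
move=> hu hv huv; rewrite /good_meet /good_weight /good_pair huv hu hv eqxx hA.
by rewrite /= orbF addn1; case: ifP; rewrite ?cards0.
Qed.

(* Step 3: the good meets are disjoint subsets of L_A. *)
Lemma LA_lower (x y z : V) :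
  x != y -> x != z -> y != z -> partset p a = [set x; y; z] ->
  L x :&: L y :&: L z = set0 ->
  good_weight (kcount p 1 + kcount p 4) #|L x :&: L y| +
  good_weight (kcount p 1 + kcount p 4) #|L x :&: L z| +
  good_weight (kcount p 1 + kcount p 4) #|L y :&: L z| <= #|LA p L a|.
Proof.
move=> hxy hxz hyz hAe h0.
have hp v : v \in [set x; y; z] -> p v = a by rewrite -hAe inE => /eqP.
have [px py pz] : [/\ p x = a, p y = a & p z = a].
  by split; apply: hp; rewrite !inE eqxx ?orbT.
rewrite -!card_good_meet // -cardsU3_disjoint.
- by apply: subset_leq_card; rewrite !subUset !good_meet_sub_LA.
- exact: meets_disjoint h0 (good_meet_sub x y)
    (subset_trans (good_meet_sub x z) (subsetIr _ _)).
- exact: meets_disjoint h0 (good_meet_sub x y)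
    (subset_trans (good_meet_sub y z) (subsetIr _ _)).
- rewrite setIAC in h0.
  exact: meets_disjoint h0 (good_meet_sub x z)
    (subset_trans (good_meet_sub y z) (subsetIl _ _)).
Qed.

End PartOfSizeThree.

Theorem lemma30 (k n : nat) (V : finType) (p : V -> 'I_k)
  (C : finType) (L : V -> {set C})
  (hk : 1 <= k) (hn : 2 * k + 2 <= n) (hV : #|V| = n)
  (hsurj : forall i : 'I_k, exists v, p v = i)
  (hL : forall v, ceil3 (n + k - 1) <= #|L v|)
  (hnocol : ~ exists f : V -> C, Lcoloring (kpart_adj p) L f)
  (hunion : #|\bigcup_(v in V) L v| <= n - 1)
  (hmin : forall (W : finType) (e : rel W), #|W| < n ->
     choosable e (maxn (chi e) (ceil3 (#|W| + chi e - 1))))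
  (a : 'I_k) (hA : #|partset p a| = 3) :
  3 * kcount p 3 + (kcount p 1 + kcount p 4) <= 3 * #|LA p L a|.
Proof.
have [x [y [z [hxy hxz hyz hAe]]]] := cards3P hA.
have h0 : L x :&: L y :&: L z = set0.
  apply/setP => c; rewrite !inE; apply/negbTE/negP => /andP [/andP [cx cy] cz].
  have hc v : p v = a -> c \in L v.
    move=> hv; have : v \in [set x; y; z] by rewrite -hAe inE hv.
    by rewrite !inE => /orP [/orP [] |] /eqP ->.
  by apply: (no_common_color hn hV hL hnocol hmin _ hc); rewrite hA.
have hk3 : 0 < kcount p 3 by rewrite -hA kcount_pos.
have hparts := kcount_sum3_le p (isT : 1 != 3) (isT : 1 != 4) (isT : 3 != 4).
have hn0 : 0 < n by lia.
have hmeets := meets_sum_lower hn0 hL hunion h0.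
apply: leq_trans (leq_mul (leqnn 3) (LA_lower hA hxy hxz hyz hAe h0)).
by apply: good_weight_sum; lia.
Qed.
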